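(* Consider a population model with two biallelic causal variants (alleles $A_1,A_2$ and $B_1,B_2$) and a biallelic marker (alleles $M_1,M_2$), with ordered genotypes, in which the marker is in linkage disequilibrium with the first causal variant and in linkage equilibrium with the second causal variant. Let $\pi\in(0,1)$ be the probability that a random individual is a case, and let $\pi_{kl}$ be the probability of being a case given ordered genotype $(A_k,A_l)$ at the first causal variant, with $\pi_{12}=\pi_{21}$. Then for all $i,j\in\{1,2\}$, \[ \mathrm{P}(M_i M_j \mid A) \;=\; q_{ij} + D_{11ij}\frac{\pi_{11}-\pi_{12}}{\pi} + D_{22ij}\frac{\pi_{22}-\pi_{12}}{\pi}, \qquad \mathrm{P}(M_i M_j \mid U) \;=\; q_{ij} + D_{11ij}\frac{\pi_{12}-\pi_{11}}{1-\pi} + D_{22ij}\frac{\pi_{12}-\pi_{22}}{1-\pi}, \] where $D_{ijkl}=\mathrm{P}(A_iA_jM_kM_l)-\mathrm{P}(A_iA_j)\mathrm{P}(M_kM_l)$. Moreover, if Hardy–Weinberg equilibrium holds, then also $D_{ijkl}=\mathrm{P}(A_iM_k)\mathrm{P}(A_jM_l)-p_ip_jq_kq_l$.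
   Context: A random individual is drawn from a population. Each individual carries two ordered haplotypes (first and second), and at each of three loci (first causal variant with alleles $A_1,A_2$; second causal variant with alleles $B_1,B_2$; marker with alleles $M_1,M_2$) has an ordered genotype. The individual is either a case (event $A$, affected) or a control (event $U$, unaffected). $\mathrm{P}(A_kA_l)=p_{kl}$ is the probability of ordered genotype $(A_k,A_l)$ at the first causal variant, $\mathrm{P}(M_iM_j)=q_{ij}$ the probability of ordered marker genotype $(M_i,M_j)$, $p_i$ and $q_k$ the population frequencies of alleles $A_i$ and $M_k$, and $\mathrm{P}(A_iA_jM_kM_l)$ the probability that the individual has haplotypes $(A_i,M_k)$ (first) and $(A_j,M_l)$ (second); $\mathrm{P}(A_iM_k)$ denotes the population frequency of the haplotype $(A_i,M_k)$. $\mathrm{P}(M_iM_j\mid A)$ and $\mathrm{P}(M_iM_j\mid U)$ are the probabilities of marker genotype $(M_i,M_j)$ among cases and among controls. The marker is not causal: given the genotypes at the two causal variants, the case/control status is independent of the marker genotype. Linkage equilibrium of the marker with the second causal variant means that, given the genotype at the first causal variant, the marker genotype is independent of the genotype at the second causal variant. Hardy–Weinberg equilibrium means that the two haplotypes of an individual are independent, i.e. $\mathrm{P}(A_iA_jM_kM_l)=\mathrm{P}(A_iM_k)\mathrm{P}(A_jM_l)$ (so in particular $\mathrm{P}(A_iA_j)=p_ip_j$ and $q_{kl}=q_kq_l$). *)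

From mathcomp Require Import all_boot all_order all_algebra.
Set Implicit Arguments. Unset Strict Implicit. Unset Printing Implicit Defensive.
Import Order.TTheory GRing.Theory Num.Theory.
Local Open Scope ring_scope.

(* Alleles are encoded by 'I_2 : index 0 = allele 1 (A_1, B_1, M_1),
   index 1 = allele 2 (A_2, B_2, M_2). *)

Definition hap := ('I_2 * 'I_2 * 'I_2)%type.
Definition alA (h : hap) : 'I_2 := h.1.1.
Definition alB (h : hap) : 'I_2 := h.1.2.
Definition alM (h : hap) : 'I_2 := h.2.

(* An individual: (first haplotype, second haplotype), and case status
   (true = case / affected, event A; false = control / unaffected, event U). *)
Definition indiv := (hap * hap * bool)%type.
Definition hap1 (w : indiv) : hap := w.1.1.
Definition hap2 (w : indiv) : hap := w.1.2.
Definition is_case (w : indiv) : bool := w.2.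

Definition genoA (w : indiv) : 'I_2 * 'I_2 := (alA (hap1 w), alA (hap2 w)).
Definition genoB (w : indiv) : 'I_2 * 'I_2 := (alB (hap1 w), alB (hap2 w)).
Definition genoM (w : indiv) : 'I_2 * 'I_2 := (alM (hap1 w), alM (hap2 w)).

Section Prob.
Variable R : realFieldType.
Variable P : {ffun indiv -> R}.

Definition is_pmf : Prop := (forall w, 0 <= P w) /\ \sum_w P w = 1.

Definition Pr (E : pred indiv) : R := \sum_(w | E w) P w.
Definition Pcond (E F : pred indiv) : R := Pr (predI E F) / Pr F.

Definition cond_indep (TX TY TZ : eqType) (X : indiv -> TX) (Y : indiv -> TY)
    (Z : indiv -> TZ) : Prop :=
  forall x y z,
    Pr [pred w | (X w == x) && (Y w == y) && (Z w == z)] * Pr [pred w | Z w == z]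
    = Pr [pred w | (X w == x) && (Z w == z)] * Pr [pred w | (Y w == y) && (Z w == z)].

Definition pi_case : R := Pr is_case.
Definition pi_geno (k l : 'I_2) : R := Pcond is_case [pred w | genoA w == (k, l)].
Definition pA2 (k l : 'I_2) : R := Pr [pred w | genoA w == (k, l)].
Definition qM2 (i j : 'I_2) : R := Pr [pred w | genoM w == (i, j)].
Definition pAM (i j k l : 'I_2) : R :=
  Pr [pred w | (genoA w == (i, j)) && (genoM w == (k, l))].
Definition Dlink (i j k l : 'I_2) : R := pAM i j k l - pA2 i j * qM2 k l.

Definition PM_case (i j : 'I_2) : R := Pcond [pred w | genoM w == (i, j)] is_case.
Definition PM_ctrl (i j : 'I_2) : R :=
  Pcond [pred w | genoM w == (i, j)] [pred w | ~~ is_case w].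

Definition hapAM (i k : 'I_2) : R :=
  (Pr [pred w | (alA (hap1 w) == i) && (alM (hap1 w) == k)]
   + Pr [pred w | (alA (hap2 w) == i) && (alM (hap2 w) == k)]) / 2%:R.
Definition pA1 (i : 'I_2) : R :=
  (Pr [pred w | alA (hap1 w) == i] + Pr [pred w | alA (hap2 w) == i]) / 2%:R.
Definition qM1 (k : 'I_2) : R :=
  (Pr [pred w | alM (hap1 w) == k] + Pr [pred w | alM (hap2 w) == k]) / 2%:R.

(* Hardy-Weinberg equilibrium: the two haplotypes of an individual are independent. *)
Definition HWE : Prop :=
  forall i j k l : 'I_2, pAM i j k l = hapAM i k * hapAM j l.

End Prob.

(* Both conditional independences together give, by the contraction property,
   that case status and marker genotype are independent given the genotype at
   the first causal variant, so P(A, M_iM_j, A_kA_l) = P(A_kA_l M_iM_j) pi_kl.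
   Summing over kl with P(A_kA_l M_iM_j) = D_klij + p_kl q_ij, the second terms
   add up to q_ij pi, while the D_klij sum to zero over kl; as pi_12 = pi_21,
   subtracting pi_12 times that zero sum leaves D_11ij (pi_11 - pi_12)
   + D_22ij (pi_22 - pi_12).  Controls follow by complementation.  Under
   Hardy-Weinberg equilibrium, P(A_iA_j) and P(M_kM_l) factor through the
   marginals of the haplotype frequencies. *)

From mathcomp Require Import all_boot all_order all_algebra ring.
Set Implicit Arguments. Unset Strict Implicit. Unset Printing Implicit Defensive.
Import Order.TTheory GRing.Theory Num.Theory.
Local Open Scope ring_scope.

Lemma sum_pair_I2 (R : nzRingType) (F : 'I_2 * 'I_2 -> R) :
  \sum_a F a = F (0, 0) + F (0, 1) + F (1, 0) + F (1, 1).
Proof.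
rewrite (eq_bigr (fun a => F (a.1, a.2))) => [|[] //].
rewrite -(pair_bigA _ (fun i j => F (i, j))) /= !big_ord_recl !big_ord0 !addr0.
have -> : lift ord0 ord0 = 1 :> 'I_2 by exact: val_inj.
by rewrite addrA.
Qed.

Section Population.
Variables (R : realFieldType) (P : {ffun indiv -> R}).

Lemma eq_Pr (E F : pred indiv) : E =1 F -> Pr P E = Pr P F.
Proof. exact: eq_bigl. Qed.

Lemma Pr_partition {T : finType} (f : indiv -> T) (E : pred indiv) :
  Pr P E = \sum_t Pr P [pred w | E w && (f w == t)].
Proof. exact: partition_big. Qed.

Hypotheses (P_ge0 : forall w, 0 <= P w) (P_sum1 : \sum_w P w = 1).

Lemma Pr_sub0 {E F : pred indiv} :
  Pr P F = 0 -> (forall w, E w -> F w) -> Pr P E = 0.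
Proof. by move=> F0 EF; apply: big1 => w /EF; apply: (psumr_eq0P _ F0). Qed.

Lemma PrI_Pcond (E F : pred indiv) : Pr P (predI E F) = Pr P F * Pcond P E F.
Proof.
rewrite /Pcond; have [F0|FN0] := eqVneq (Pr P F) 0; last by rewrite mulrC divfK.
by rewrite F0 mul0r; apply: (Pr_sub0 F0) => w /andP[].
Qed.

Lemma Pr_partition_pair {TZ : eqType} {TW : finType}
    (Z : indiv -> TZ) (W : indiv -> TW) (E : pred indiv) (z : TZ) :
  Pr P [pred w | E w && (Z w == z)]
  = \sum_t Pr P [pred w | E w && ((Z w, W w) == (z, t))].
Proof.
rewrite (Pr_partition W); apply: eq_bigr => t _.
by apply: eq_Pr => w /=; rewrite xpair_eqE andbA.
Qed.

Lemma cond_indep_contraction (TX TY TZ : eqType) (TW : finType)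
    (X : indiv -> TX) (Y : indiv -> TY) (Z : indiv -> TZ) (W : indiv -> TW) :
  cond_indep P X Y (fun w => (Z w, W w)) -> cond_indep P Y W Z ->
  cond_indep P X Y Z.
Proof.
move=> XY_ZW YW_Z x y z.
rewrite (Pr_partition_pair Z W [pred w | (X w == x) && (Y w == y)]).
rewrite (Pr_partition_pair Z W [pred w | X w == x]) !mulr_suml.
apply: eq_bigr => t _; move: (XY_ZW x y (z, t)).
set XYzt := Pr P _; set zt := Pr P _; set Xzt := Pr P _; set Yzt := Pr P _.
have Y_z : Yzt * Pr P [pred w | Z w == z]
           = Pr P [pred w | (Y w == y) && (Z w == z)] * zt.
  have := YW_Z y t z; congr (_ * _ = _ * _); apply: eq_Pr => w /=.
    by rewrite xpair_eqE; do ![case: (_ == _)].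
  by rewrite xpair_eqE andbC.
move=> XY_zt.
have [zt0|ztN0] := eqVneq zt 0.
  have XYzt0 : XYzt = 0 by apply: (Pr_sub0 zt0) => w /andP[].
  have Xzt0 : Xzt = 0 by apply: (Pr_sub0 zt0) => w /andP[].
  by rewrite XYzt0 Xzt0 !mul0r.
apply: (mulIf ztN0); rewrite mulrAC XY_zt -mulrA Y_z; ring.
Qed.

Lemma cond_indep_Pcond (TX TY TZ : eqType)
    (X : indiv -> TX) (Y : indiv -> TY) (Z : indiv -> TZ) :
  cond_indep P X Y Z -> forall x y z,
  Pr P [pred w | (X w == x) && (Y w == y) && (Z w == z)]
  = Pr P [pred w | (Y w == y) && (Z w == z)]
    * Pcond P [pred w | X w == x] [pred w | Z w == z].
Proof.
move=> XY_Z x y z; rewrite /Pcond.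
have [z0|zN0] := eqVneq (Pr P [pred w | Z w == z]) 0.
  by rewrite z0 invr0 !mulr0; apply: (Pr_sub0 z0) => w /andP[].
by apply: (mulIf zN0); rewrite XY_Z -mulrA divfK // mulrC.
Qed.

Lemma PrI_predC (E F : pred indiv) :
  Pr P (predI E (predC F)) = Pr P E - Pr P (predI E F).
Proof. by rewrite [Pr P E](bigID F) addrC addKr. Qed.

Lemma Pr_predC (E : pred indiv) : Pr P (predC E) = 1 - Pr P E.
Proof.
rewrite -P_sum1 -[\sum_w P w]/(Pr P xpredT) -PrI_predC.
by apply: eq_Pr.
Qed.

Lemma sum_pA2 : \sum_(a : 'I_2 * 'I_2) pA2 P a.1 a.2 = 1.
Proof.
rewrite -P_sum1 -[\sum_w P w]/(Pr P xpredT) (Pr_partition genoA).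
by apply: eq_bigr => -[i j] _.
Qed.

Lemma pA2_sum_pAM i j : pA2 P i j = \sum_(m : 'I_2 * 'I_2) pAM P i j m.1 m.2.
Proof. by rewrite /pA2 (Pr_partition genoM); apply: eq_bigr => -[k l] _. Qed.

Lemma qM2_sum_pAM k l : qM2 P k l = \sum_(a : 'I_2 * 'I_2) pAM P a.1 a.2 k l.
Proof.
rewrite /qM2 (Pr_partition genoA); apply: eq_bigr => -[i j] _.
by apply: eq_Pr => w /=; rewrite andbC.
Qed.

Lemma sum_Dlink k l : \sum_(a : 'I_2 * 'I_2) Dlink P a.1 a.2 k l = 0.
Proof. by rewrite sumrB -mulr_suml sum_pA2 mul1r -qM2_sum_pAM subrr. Qed.

Lemma pi_case_sum : pi_case P = \sum_(a : 'I_2 * 'I_2) pA2 P a.1 a.2 * pi_geno P a.1 a.2.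
Proof.
rewrite /pi_case (Pr_partition genoA); apply: eq_bigr => -[i j] _ /=.
exact: (PrI_Pcond is_case [pred w | genoA w == (i, j)]).
Qed.

Lemma Pr_case_marker k l :
  cond_indep P is_case genoM genoA ->
  Pr P (predI [pred w | genoM w == (k, l)] is_case)
  = \sum_(a : 'I_2 * 'I_2) pAM P a.1 a.2 k l * pi_geno P a.1 a.2.
Proof.
move=> CI; rewrite (Pr_partition genoA); apply: eq_bigr => -[i j] _ /=.
transitivity (Pr P [pred w | (is_case w == true) && (genoM w == (k, l))
                             && (genoA w == (i, j))]).
  by apply: eq_Pr => w /=; rewrite eqb_id (andbC (genoM w == _)).
rewrite (cond_indep_Pcond CI); congr (_ * _).
  by apply: eq_Pr => w /=; rewrite andbC.
by rewrite /pi_geno /Pcond; congr (_ / _); apply: eq_Pr => w /=; rewrite eqb_id.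
Qed.

Lemma Pr_case_marker_Dlink k l :
  pi_geno P 0 1 = pi_geno P 1 0 ->
  cond_indep P is_case genoM genoA ->
  Pr P (predI [pred w | genoM w == (k, l)] is_case)
  = qM2 P k l * pi_case P + Dlink P 0 0 k l * (pi_geno P 0 0 - pi_geno P 0 1)
    + Dlink P 1 1 k l * (pi_geno P 1 1 - pi_geno P 0 1).
Proof.
move=> pi01_sym CI; rewrite Pr_case_marker //.
have -> : \sum_a pAM P a.1 a.2 k l * pi_geno P a.1 a.2
    = \sum_(a : 'I_2 * 'I_2) (Dlink P a.1 a.2 k l * (pi_geno P a.1 a.2 - pi_geno P 0 1)
                              + qM2 P k l * (pA2 P a.1 a.2 * pi_geno P a.1 a.2))
      + pi_geno P 0 1 * \sum_a Dlink P a.1 a.2 k l.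
  by rewrite mulr_sumr -big_split; apply: eq_bigr => a _ /=; rewrite /Dlink; ring.
rewrite sum_Dlink mulr0 addr0 big_split -mulr_sumr -pi_case_sum sum_pair_I2 /=.
by rewrite -pi01_sym subrr mulr0 addr0; ring.
Qed.

Lemma sum_hapAM_M i : \sum_k hapAM P i k = pA1 P i.
Proof.
rewrite /hapAM -mulr_suml big_split /=; congr (_ / _).
by rewrite (Pr_partition (alM \o hap1)) (Pr_partition (alM \o hap2)).
Qed.

Lemma sum_hapAM_A k : \sum_i hapAM P i k = qM1 P k.
Proof.
rewrite /hapAM -mulr_suml big_split /=; congr (_ / _).
rewrite (Pr_partition (alA \o hap1)) (Pr_partition (alA \o hap2)).
by congr (_ + _); apply: eq_bigr => a _; apply: eq_Pr => w /=; rewrite andbC.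
Qed.

Hypothesis hwe : HWE P.

Lemma HWE_pA2 i j : pA2 P i j = pA1 P i * pA1 P j.
Proof.
rewrite pA2_sum_pAM -!sum_hapAM_M big_distrlr pair_bigA.
by apply: eq_bigr => -[k l] _; apply: hwe.
Qed.

Lemma HWE_qM2 k l : qM2 P k l = qM1 P k * qM1 P l.
Proof.
rewrite qM2_sum_pAM -!sum_hapAM_A big_distrlr pair_bigA.
by apply: eq_bigr => -[i j] _; apply: hwe.
Qed.

Lemma HWE_Dlink i j k l :
  Dlink P i j k l = hapAM P i k * hapAM P j l - pA1 P i * pA1 P j * qM1 P k * qM1 P l.
Proof. by rewrite /Dlink hwe HWE_pA2 HWE_qM2 !mulrA. Qed.

End Population.

Theorem lemma1 (R : realFieldType) (P : {ffun indiv -> R}) :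
  is_pmf P ->
  0 < pi_case P < 1 ->
  pi_geno P 0 1 = pi_geno P 1 0 ->
  (* the marker is not causal *)
  cond_indep P is_case genoM (fun w => (genoA w, genoB w)) ->
  (* linkage equilibrium of the marker with the second causal variant *)
  cond_indep P genoM genoB genoA ->
  (forall i j : 'I_2,
     PM_case P i j =
       qM2 P i j + Dlink P 0 0 i j * ((pi_geno P 0 0 - pi_geno P 0 1) / pi_case P)
                 + Dlink P 1 1 i j * ((pi_geno P 1 1 - pi_geno P 0 1) / pi_case P)
     /\
     PM_ctrl P i j =
       qM2 P i j + Dlink P 0 0 i j * ((pi_geno P 0 1 - pi_geno P 0 0) / (1 - pi_case P))
                 + Dlink P 1 1 i j * ((pi_geno P 0 1 - pi_geno P 1 1) / (1 - pi_case P)))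
  /\
  (HWE P -> forall i j k l : 'I_2,
     Dlink P i j k l = hapAM P i k * hapAM P j l - pA1 P i * pA1 P j * qM1 P k * qM1 P l).
Proof.
move=> [P_ge0 P_sum1] /andP[pi_gt0 pi_lt1] pi01_sym CI_case CI_marker.
split=> [i j|]; last exact: HWE_Dlink.
have CI := cond_indep_contraction P_ge0 CI_case CI_marker.
have pi_neq0 : pi_case P != 0 by rewrite gt_eqF.
have pi_neq1 : 1 - pi_case P != 0 by rewrite subr_eq0 eq_sym lt_eqF.
rewrite /PM_case /PM_ctrl /Pcond PrI_predC Pr_predC // -/(qM2 P i j).
rewrite (Pr_case_marker_Dlink P_ge0 P_sum1 _ _ pi01_sym CI) -/(pi_case P).
(* [field] fails to treat [qM2 P i j] as an atom, hence the generalization. *)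
by move: (qM2 P i j) => q; split; field.
Qed.
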